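(* Let $m\ge1$ and let $\alpha\subseteq\langle 2m\rangle$ be a $2m$-element subset of weight zero, i.e. $\alpha=\{\bar\alpha_m,\dots,\bar\alpha_1,\alpha_1,\dots,\alpha_m\}$ with positive part $\alpha_+=\{\alpha_1<\dots<\alpha_m\}\subseteq[2m]$. If $\alpha$ is Northeast, then $\alpha_+\ge(2,4,\dots,2m)$ in $\binom{[2m]}{m}$, i.e. $\alpha_i\ge 2i$ for $i=1,\dots,m$. In particular $1\notin\alpha_+$ and $2m\in\alpha_+$.
   Context: $\langle 2m\rangle=\{\overline{2m}<\dots<\bar1<1<\dots<2m\}$ with $\bar\imath=-i$; $\binom{[2m]}{m}$ is ordered componentwise on increasing sequences. A $2m$-element subset of $\langle 2m\rangle$ corresponds to a partition in the $2m\times 2m$ square via the lattice path from the lower-left to the upper-right corner whose $j$-th step is upward if the $j$-th smallest element of $\langle 2m\rangle$ lies in the subset and rightward otherwise (the partition being the boxes between the path and the top and left edges). Such a partition $\lambda$ (boxes indexed (row from top, column from left)) is Northeast if for every box $(r,c)\in\lambda$ with $r>c$, the box $(c,r)$ also lies in $\lambda$. *)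

From mathcomp Require Import all_boot all_order all_algebra.
Set Implicit Arguments. Unset Strict Implicit. Unset Printing Implicit Defensive.
Import GRing.Theory Num.Theory.

(* The totally ordered set <2m> = {-2m < ... < -1 < 1 < ... < 2m}, with
   \bar i encoded as the integer -i.  [angle_elem m j] is the (j+1)-th
   smallest element (j is 0-indexed, j < 4m). *)
Definition angle_elem (m j : nat) : int :=
  if j < 2 * m then (- (Posz (2 * m - j)))%R else Posz (j - 2 * m).+1.

Definition angle (m : nat) : seq int := [seq angle_elem m j | j <- iota 0 (4 * m)].

Definition subset_angle (m : nat) (alpha : pred int) : Prop :=
  forall x : int, alpha x -> x \in angle m.

Definition card_angle (m : nat) (alpha : pred int) : nat :=
  size [seq x <- angle m | alpha x].

Definition weight_zero (m : nat) (alpha : pred int) : Prop :=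
  forall i : nat, 1 <= i <= 2 * m -> alpha (Posz i) = alpha (- Posz i)%R.

Definition pos_part (m : nat) (alpha : pred int) : seq nat :=
  [seq i <- iota 1 (2 * m) | alpha (Posz i)].

(* Lattice path: the j-th step is up (true) iff the j-th smallest element
   of <2m> lies in alpha, right (false) otherwise. *)
Definition steps (m : nat) (alpha : pred int) : seq bool :=
  [seq alpha x | x <- angle m].

(* height (number of up steps) of the path just before its c-th right step
   (c is 1-indexed) *)
Definition col_height (m : nat) (alpha : pred int) (c : nat) : nat :=
  let s := steps m alpha in
  let rights := [seq j <- iota 0 (size s) | ~~ nth false s j] in
  let k := nth 0 rights c.-1 in
  count id (take k s).

(* box (r, c) (row from top, column from left, 1-indexed) of the 2m x 2m
   square lies in the partition: it is between the path and the top/left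
   edges, i.e. its bottom edge (at height 2m - r) is at or above the path
   in column c. *)
Definition in_partition (m : nat) (alpha : pred int) (r c : nat) : bool :=
  [&& 1 <= r <= 2 * m, 1 <= c <= 2 * m & col_height m alpha c <= 2 * m - r].

Definition northeast (m : nat) (alpha : pred int) : Prop :=
  forall r c : nat, in_partition m alpha r c -> c < r -> in_partition m alpha c r.

From mathcomp Require Import all_boot all_order all_algebra.
From mathcomp Require Import zify.

(* Read the boundary path of alpha as a word of 2m up and 2m right steps;
   weight zero makes it a palindrome.  If after n >= 2m steps the path had
   more up steps u than right steps r, then by the symmetry column 2m-r starts
   at height at most 2m-u < 2m-r, so the box (r+1, 2m-r) lies in the
   partition; but column r+1 starts at height at least u > r, so the mirror
   box (2m-r, r+1) does not, against Northeast.
   Hence the second half of the path, whose up steps are the elements of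
   alpha_+, never has more up than right steps: every prefix [1, t] contains
   at most t/2 elements of alpha_+, i.e. alpha_i >= 2i. *)

Lemma nth_filter_iota {p : pred nat} {a N i : nat} : i < count p (iota a N) ->
  let k := nth 0 [seq j <- iota a N | p j] i in
  [/\ a <= k < a + N, p k & count p (iota a (k - a)) = i].
Proof.
elim: N a i => [|N IH] a i //=.
have shift k : a < k -> k - a = (k - a.+1).+1 by lia.
case pa: (p a) => /=.
- case: i => [|i] /=; first by rewrite subnn pa; split => //; lia.
  rewrite add1n ltnS => /IH [/andP[ak kN] pk cnt].
  by split => //; [lia | rewrite shift //= pa cnt].
- rewrite add0n => /IH [/andP[ak kN] pk cnt].
  by split => //; [lia | rewrite shift //= pa cnt].
Qed.

Lemma count_take_mono (T : Type) (f : pred T) (s : seq T) :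
  {homo (fun n => count f (take n s)) : n n' / n <= n'}.
Proof. by move=> n n' le_nn'; rewrite -(subnKC le_nn') takeD count_cat leq_addr. Qed.

Section LatticePath.

Variable s : seq bool.

Definition ups n := count id (take n s).
Definition rights n := count negb (take n s).

Definition path_col_height c :=
  let right_steps := [seq j <- iota 0 (size s) | ~~ nth false s j] in
  count id (take (nth 0 right_steps c.-1) s).

Lemma ups_mono : {homo ups : n n' / n <= n'}.
Proof. exact: count_take_mono. Qed.

Lemma rights_mono : {homo rights : n n' / n <= n'}.
Proof. exact: count_take_mono. Qed.

Lemma ups_add_rights n : n <= size s -> ups n + rights n = n.
Proof.
move=> le_ns; have -> : rights n = count (predC id) (take n s) by apply: eq_count.
by rewrite count_predC size_take; case: ltnP => //; lia.
Qed.

Lemma count_take_nth (f : pred bool) k : k <= size s ->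
  count (fun j => f (nth false s j)) (iota 0 k) = count f (take k s).
Proof.
move=> le_ks; rewrite -[in RHS](mkseq_nth false s) /mkseq -map_take take_iota.
by rewrite (minn_idPl le_ks) count_map.
Qed.

Lemma path_col_heightP c : 1 <= c <= count negb s ->
  exists k, [/\ rights k = c.-1, rights k.+1 = c & path_col_height c = ups k].
Proof.
move=> /andP[c_gt0 c_le].
have lt_c : c.-1 < count (fun j => ~~ nth false s j) (iota 0 (size s)).
  by rewrite (count_take_nth negb) // take_size; lia.
have [/andP[_ lt_ks] right_k cnt] := nth_filter_iota lt_c.
set k := nth 0 _ _ in lt_ks right_k cnt; rewrite add0n in lt_ks.
rewrite subn0 (count_take_nth negb) in cnt; last lia.
exists k; split => //.
by rewrite /rights (take_nth false) // -cats1 count_cat cnt /= right_k; lia.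
Qed.

Lemma ups_le_path_col_height c n : 1 <= c <= count negb s ->
  rights n < c -> ups n <= path_col_height c.
Proof.
move=> /path_col_heightP[k [_ rk1 ->]] lt_nc; apply: ups_mono.
by rewrite leqNgt; apply/negP => /rights_mono; lia.
Qed.

Lemma path_col_height_le_ups c n : 1 <= c <= count negb s ->
  c <= rights n -> path_col_height c <= ups n.
Proof.
move=> c_range le_cn; have [k [rk _ ->]] := path_col_heightP _ c_range.
apply: ups_mono; rewrite leqNgt; apply/negP => /ltnW/rights_mono; lia.
Qed.

Lemma count_take_palindrome (f : pred bool) n : rev s = s -> n <= size s ->
  count f (take n s) + count f (take (size s - n) s) = count f s.
Proof.
move=> srev le_ns; rewrite -{4}(cat_take_drop n s) count_cat.
by congr (_ + _); rewrite -[in RHS]srev drop_rev count_rev.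
Qed.

End LatticePath.

Section SteppedAngle.

Variables (m : nat) (alpha : pred int).

Local Notation s := (steps m alpha).

Lemma size_steps : size s = 4 * m.
Proof. by rewrite /steps /angle !size_map size_iota. Qed.

Lemma nth_steps j : j < 4 * m -> nth false s j = alpha (angle_elem m j).
Proof.
move=> lt_j; rewrite /steps /angle (nth_map 0%R) ?size_map ?size_iota //.
by rewrite (nth_map 0) ?size_iota // nth_iota.
Qed.

Lemma steps_palindrome : weight_zero m alpha -> rev s = s.
Proof.
move=> w0; apply: (@eq_from_nth _ false); first by rewrite size_rev.
move=> j; rewrite size_rev size_steps => lt_j.
rewrite nth_rev size_steps // !nth_steps /angle_elem; try lia.
case: (ltnP j (2 * m)) => hj.
- rewrite ifF; last lia.
  by rewrite (_ : _.+1 = 2 * m - j) ?w0 //; lia.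
- rewrite ifT; last lia.
  by rewrite (_ : 2 * m - _ = (j - 2 * m).+1) ?w0 //; lia.
Qed.

Lemma col_height_steps c : col_height m alpha c = path_col_height s c.
Proof. by []. Qed.

Lemma drop_steps : drop (2 * m) s = [seq alpha (Posz i) | i <- iota 1 (2 * m)].
Proof.
rewrite /steps /angle -!map_drop drop_iota add0n (_ : 4 * m - 2 * m = 2 * m); last lia.
have iota_shift a : iota a (2 * m) = map (addn a) (iota 0 (2 * m)).
  by rewrite -iotaDl addn0.
rewrite (iota_shift 1) (iota_shift (2 * m)) -!map_comp.
by apply: eq_map => j /=; rewrite /angle_elem ifF ?addKn // -{2}[2 * m]addn0 ltn_add2l.
Qed.

Hypotheses (card_alpha : card_angle m alpha = 2 * m) (w0 : weight_zero m alpha).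

Lemma count_steps_up : count id s = 2 * m.
Proof. by rewrite -card_alpha /card_angle size_filter /steps count_map. Qed.

Lemma count_steps_right : count negb s = 2 * m.
Proof.
have := @ups_add_rights s _ (leqnn _).
by rewrite /ups /rights take_size count_steps_up size_steps; lia.
Qed.

Lemma count_take_steps_mirror (f : pred bool) n : n <= 4 * m ->
  count f (take n s) + count f (take (4 * m - n) s) = count f s.
Proof. by rewrite -size_steps; apply/count_take_palindrome/steps_palindrome. Qed.

Lemma ups_half : ups s (2 * m) = m.
Proof.
have := count_take_steps_mirror id (2 * m); rewrite count_steps_up.
by rewrite (_ : 4 * m - 2 * m = 2 * m) -/(ups _ _); lia.
Qed.

Lemma northeast_ups_le_rights n : northeast m alpha ->
  2 * m <= n <= 4 * m -> ups s n <= rights s n.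
Proof.
move=> ne /andP[le_2m_n le_n_4m]; rewrite leqNgt; apply/negP => lt_ru.
set r := rights s n.
have ur : ups s n + rights s n = n by apply: ups_add_rights; rewrite size_steps.
have mirror_up := count_take_steps_mirror id n le_n_4m.
have mirror_right := count_take_steps_mirror negb n le_n_4m.
rewrite count_steps_up -/(ups _ _) -/(ups _ _) in mirror_up.
rewrite count_steps_right -/(rights _ _) -/(rights _ _) in mirror_right.
have r_ge_m : m <= r.
  have : ups s (2 * m) + rights s (2 * m) = 2 * m.
    by apply: ups_add_rights; rewrite size_steps; lia.
  by have := rights_mono s _ _ le_2m_n; rewrite ups_half; lia.
have col_right := @ups_le_path_col_height s r.+1 n.
have col_left := @path_col_height_le_ups s (2 * m - r) (4 * m - n).
rewrite count_steps_right in col_right col_left.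
have box : in_partition m alpha r.+1 (2 * m - r).
  have col := col_left ltac:(lia) ltac:(lia).
  by rewrite /in_partition col_height_steps; apply/and3P; split; try apply/andP; lia.
have /and3P[_ _] := ne _ _ box ltac:(lia).
by have := col_right ltac:(lia) ltac:(lia); rewrite col_height_steps; lia.
Qed.

Lemma ups_second_half t : t <= 2 * m ->
  ups s (2 * m + t) = m + count (fun i => alpha (Posz i)) (iota 1 t).
Proof.
move=> le_t; rewrite /ups takeD count_cat -/(ups _ _) ups_half drop_steps.
by rewrite -map_take take_iota (minn_idPl le_t) count_map.
Qed.

Lemma count_pos_part_prefix : northeast m alpha -> forall t, t <= 2 * m ->
  2 * count (fun i => alpha (Posz i)) (iota 1 t) <= t.
Proof.
move=> ne t le_t; have := northeast_ups_le_rights (2 * m + t) ne.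
have : ups s (2 * m + t) + rights s (2 * m + t) = 2 * m + t.
  by apply: ups_add_rights; rewrite size_steps; lia.
by rewrite ups_second_half //; lia.
Qed.

Lemma size_pos_part : count (fun i => alpha (Posz i)) (iota 1 (2 * m)) = m.
Proof.
have := @ups_second_half (2 * m) (leqnn _); rewrite /ups (_ : 2 * m + 2 * m = size s).
  by rewrite take_size count_steps_up; lia.
by rewrite size_steps; lia.
Qed.

End SteppedAngle.

Section Ballot.

Variables (q : pred nat) (N : nat).
Hypothesis ballot : forall t, t <= N -> 2 * count q (iota 1 t) <= t.

Lemma nth_filter_iota_ballot i : i < count q (iota 1 N) ->
  2 * i.+1 <= nth 0 [seq j <- iota 1 N | q j] i.
Proof.
move=> lt_i; have [/andP[k_gt0 lt_kN] qk cnt] := nth_filter_iota lt_i.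
set k := nth 0 _ _ in k_gt0 lt_kN qk cnt *.
suff <- : count q (iota 1 k) = i.+1 by apply: ballot; lia.
by rewrite -[in iota 1 k](subnK k_gt0) iotaD count_cat cnt (subnKC k_gt0) /= qk addn1.
Qed.

Lemma ballot_first_notin : 1 \notin [seq j <- iota 1 N | q j].
Proof.
rewrite mem_filter; apply/negP => /andP[q1 /[!mem_iota] le1].
by have := ballot 1 ltac:(lia); rewrite /= q1.
Qed.

Lemma ballot_last_in : 0 < N -> 2 * count q (iota 1 N) = N ->
  N \in [seq j <- iota 1 N | q j].
Proof.
move=> N_gt0 full; rewrite mem_filter mem_iota; apply/andP; split; last lia.
apply/negPn/negP => qN; have := ballot N.-1 (leq_pred N).
suff -> : count q (iota 1 N.-1) = count q (iota 1 N) by lia.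
rewrite -[in iota 1 N](prednK N_gt0) -[N.-1.+1]addn1 iotaD count_cat /=.
by rewrite add1n (prednK N_gt0) (negbTE qN) !addn0.
Qed.

End Ballot.

Theorem proposition5p4 (m : nat) (alpha : pred int) :
  1 <= m ->
  subset_angle m alpha ->
  card_angle m alpha = 2 * m ->
  weight_zero m alpha ->
  northeast m alpha ->
  (forall i : nat, i < m -> 2 * i.+1 <= nth 0 (pos_part m alpha) i)
  /\ 1 \notin pos_part m alpha /\ 2 * m \in pos_part m alpha.
Proof.
move=> m_gt0 _ card_alpha w0 ne.
have ballot := count_pos_part_prefix m alpha card_alpha w0 ne.
have size_pos := size_pos_part m alpha card_alpha w0.
split; last split.
- by move=> i lt_im; apply: nth_filter_iota_ballot => //; rewrite size_pos.
- exact: ballot_first_notin.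
- by apply: ballot_last_in => //; lia.
Qed.
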